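(* Let $A$ be a general metric space, $\mathcal F_1$ a Cauchy filter and $\mathcal F_2$ a weakly flat filter on $A$. Then $$\sup_{x\in A}[M^-(\mathcal F_1)(x),M^-(\mathcal F_2)(x)]=\lim^-_{y\in\mathcal F_2}\lim^+_{x\in\mathcal F_1}A(x,y).$$
   Context: $[0,\infty]$ with $+$, $[x,y]=\max(y-x,0)$ for finite $x,y$, $[x,\infty]=\infty$ for $x<\infty$, $[\infty,y]=0$; $\inf\emptyset=\infty$, $\sup\emptyset=0$. A general metric space $A$ is a set with $A(-,-):A\times A\to[0,\infty]$, $A(x,x)=0$, $A(x,z)\le A(x,y)+A(y,z)$ (no symmetry). A filter on $A$ is a nonempty set of nonempty subsets closed under finite intersections and supersets; $\lim^+_{\mathcal F}t=\inf_{f\in\mathcal F}\sup_{x\in f}t(x)$, $\lim^-_{\mathcal F}t=\sup_{f\in\mathcal F}\inf_{x\in f}t(x)$; $M^-(\mathcal F)(x)=\lim^-_{y\in\mathcal F}A(x,y)$. $\mathcal F$ is Cauchy iff $\inf_{f\in\mathcal F}\sup_{x,y\in f}A(x,y)=0$; weakly flat iff $\lim^+_{\mathcal F}M^-(\mathcal F)=0$. *)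

(* [0,oo] is modelled inside the extended reals \bar R. *)
From HB Require Import structures.
From mathcomp Require Import all_boot all_order all_algebra.
From mathcomp Require Import all_classical all_reals ereal.
Set Implicit Arguments. Unset Strict Implicit. Unset Printing Implicit Defensive.
Import Order.TTheory GRing.Theory Num.Theory.
Local Open Scope classical_set_scope.
Local Open Scope ereal_scope.

Section Defs.
Context {R : realType}.

(* truncated difference [x,y] on [0,oo] *)
Definition tminus (x y : \bar R) : \bar R :=
  match x, y with
  | EFin a, EFin b => EFin (Num.max (b - a) 0)%R
  | EFin _, +oo => +oo
  | +oo, _ => 0
  | _, _ => 0 (* -oo never occurs: values lie in [0,oo] *)
  end.

(* inf with inf(empty) = oo, sup with sup(empty) = 0 (values are >= 0) *)
Definition einf (S : set (\bar R)) : \bar R := ereal_inf S.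
Definition esup (S : set (\bar R)) : \bar R := ereal_sup ([set 0] `|` S).

Context {T : Type}.

Definition gen_metric (d : T -> T -> \bar R) : Prop :=
  [/\ forall x y, 0 <= d x y,
      forall x, d x x = 0 &
      forall x y z, d x z <= d x y + d y z].

Definition is_filter (F : set (set T)) : Prop :=
  [/\ exists f, F f,
      forall f, F f -> exists x, f x,
      forall f g, F f -> F g -> F (f `&` g) &
      forall f g, F f -> f `<=` g -> F g].

Definition limsupF (F : set (set T)) (t : T -> \bar R) : \bar R :=
  einf [set esup (t @` f) | f in F].
Definition liminfF (F : set (set T)) (t : T -> \bar R) : \bar R :=
  esup [set einf (t @` f) | f in F].

Definition Mminus (d : T -> T -> \bar R) (F : set (set T)) (x : T) : \bar R :=
  liminfF F (fun y => d x y).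

Definition cauchyF (d : T -> T -> \bar R) (F : set (set T)) : Prop :=
  einf [set esup [set d p.1 p.2 | p in f `*` f] | f in F] = 0.

Definition weakly_flat (d : T -> T -> \bar R) (F : set (set T)) : Prop :=
  limsupF F (Mminus d F) = 0.

End Defs.

(* The inequality [M^-(F2) x <= M^-(F1) x + rhs] is a pure triangle-inequality
   argument, and it bounds the left-hand side by the right-hand side.
   Conversely, Cauchy-ness of F1 gives sets f in F1 of diameter at most e; for
   x in f one has M^-(F1) x <= e and [lim^+_F1 A(-, y) <= e + A(x, y)], so
   every [inf_(y in g) lim^+_F1 A(-, y)] is at most [2 e + lhs]. *)
From mathcomp Require Import all_boot all_order all_algebra.
From mathcomp Require Import all_classical all_reals ereal.
Import Order.TTheory GRing.Theory Num.Theory.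
Local Open Scope classical_set_scope.
Local Open Scope ereal_scope.

Section ExtendedBounds.
Context {R : realType}.
Implicit Types (S : set (\bar R)) (a b c x y z : \bar R).

Lemma esup_ubound S x : S x -> x <= esup S.
Proof. by move=> Sx; apply: ereal_sup_ubound; right. Qed.

Lemma esup_ge0 S : 0 <= esup S.
Proof. by apply: ereal_sup_ubound; left. Qed.

Lemma ge_esup S x : 0 <= x -> (forall y, S y -> y <= x) -> esup S <= x.
Proof. by move=> x0 Sx; apply: ge_ereal_sup => y [->|/Sx]. Qed.

Lemma einf_image_le_addl (I : Type) (g : set I) (t u : I -> \bar R) (c : R) :
  (forall i, g i -> t i <= c%:E + u i) ->
  einf (t @` g) <= c%:E + einf (u @` g).
Proof.
move=> tu; rewrite -leeBlDl//; apply/ereal_infP => _ [i gi <-].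
rewrite leeBlDl//; apply: le_trans _ (tu i gi).
by apply: ereal_inf_lbound; exists i.
Qed.

Lemma lee_adde_of_gt x y z : -oo < x -> -oo < y ->
  (forall a b : R, x < a%:E -> y < b%:E -> z <= (a + b)%:E) -> z <= x + y.
Proof.
case: x => [r| |] // _; case: y => [s| |] // _ H; rewrite ?leey//.
apply/lee_addgt0Pr => e e0; rewrite -EFinD.
have e20 : (0 < e / 2)%R by rewrite divr_gt0.
apply: le_trans (H (r + e / 2)%R (s + e / 2)%R _ _) _;
  rewrite ?lte_fin ?ltrDl//.
by rewrite lee_fin addrACA -splitr.
Qed.

Lemma tminus_le a b c : 0 <= a -> 0 <= c -> (tminus a b <= c) = (b <= a + c).
Proof.
case: a => [r| |] // r0; case: c => [s| |] //; rewrite ?lee_fin => s0;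
  case: b => [t| |] //=; rewrite ?leey ?leNye ?addey ?addye //.
by rewrite -EFinD !lee_fin ge_max s0 andbT lerBlDl.
Qed.

End ExtendedBounds.

Section GeneralMetric.
Context {R : realType} {T : Type} {d : T -> T -> \bar R}.
Hypothesis dmetric : gen_metric d.

Let d_ge0 x y : 0 <= d x y. Proof. by case: dmetric. Qed.
Let d_triangle x y z : d x z <= d x y + d y z. Proof. by case: dmetric. Qed.

Lemma cauchyF_small_set {F : set (set T)} {e : R} :
  cauchyF d F -> (0 < e)%R ->
  exists2 f, F f & forall p q, f p -> f q -> d p q <= e%:E.
Proof.
rewrite /cauchyF => cauF e0.
have /ereal_inf_lt[_ [f Ff <-] diam_f] : einf
    [set esup [set d p.1 p.2 | p in f `*` f] | f in F] < e%:E.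
  by rewrite cauF lte_fin.
exists f => // p q fp fq; apply/ltW/le_lt_trans/diam_f.
by apply: esup_ubound; exists (p, q).
Qed.

Lemma Mminus_le_diam {F : set (set T)} {f x} {e : R} : is_filter F -> F f ->
  (forall p q, f p -> f q -> d p q <= e%:E) -> f x -> Mminus d F x <= e%:E.
Proof.
move=> [_ F_nonempty F_cap _] Ff small_f fx.
apply: ge_esup => [|_ [f' Ff' <-]].
  exact: le_trans (d_ge0 x x) (small_f x x fx fx).
have [z [fz f'z]] := F_nonempty _ (F_cap _ _ Ff Ff').
by apply: le_trans _ (small_f x z fx fz); apply: ereal_inf_lbound; exists z.
Qed.

Lemma limsupF_dist_le_diam {F : set (set T)} {f x y} {e : R} : F f ->
  (forall p q, f p -> f q -> d p q <= e%:E) -> f x ->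
  limsupF F (fun z => d z y) <= e%:E + d x y.
Proof.
move=> Ff small_f fx.
apply: (le_trans (y := esup ((fun z => d z y) @` f))).
  by apply: ereal_inf_lbound; exists f.
apply: ge_esup => [|_ [z fz <-]].
  by rewrite adde_ge0// (le_trans (d_ge0 x x) (small_f x x fx fx)).
by apply: le_trans (d_triangle z x y) _; apply: leeD2r; apply: small_f.
Qed.

Lemma Mminus_le_add_liminf (F1 F2 : set (set T)) x :
  Mminus d F2 x <=
  Mminus d F1 x + liminfF F2 (fun y => limsupF F1 (fun z => d z y)).
Proof.
apply: ge_esup => [|_ [g Fg <-]]; first by rewrite adde_ge0// esup_ge0.
apply: lee_adde_of_gt; rewrite ?(lt_le_trans _ (esup_ge0 _))//.
move=> a b M1x_lt rhs_lt.
have /ereal_inf_lt[_ [y gy <-]] :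
    einf ((fun y => limsupF F1 (d^~ y)) @` g) < b%:E.
  by apply: le_lt_trans rhs_lt; apply: esup_ubound; exists g.
move=> /ereal_inf_lt[_ [f Ff <-] sup_f_lt].
have /ereal_inf_lt[_ [z fz <-] dxz_lt] : einf (d x @` f) < a%:E.
  by apply: le_lt_trans M1x_lt; apply: esup_ubound; exists f.
apply: (le_trans (y := d x y)); first by apply: ereal_inf_lbound; exists y.
apply: le_trans (d_triangle x z y) _; rewrite EFinD; apply/ltW/lteD => //.
by apply: le_lt_trans sup_f_lt; apply: esup_ubound; exists z.
Qed.

End GeneralMetric.

Theorem mainTheorem16 (R : realType) (T : Type) (d : T -> T -> \bar R)
  (F1 F2 : set (set T)) :
  gen_metric d -> is_filter F1 -> is_filter F2 ->
  cauchyF d F1 -> weakly_flat d F2 ->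
  esup [set tminus (Mminus d F1 x) (Mminus d F2 x) | x in [set: T]] =
  liminfF F2 (fun y => limsupF F1 (fun x => d x y)).
Proof.
move=> dmetric F1filter F2filter cauF1 _.
set lhs := esup _; apply: le_anti; apply/andP; split.
  apply: ge_esup => [|_ [x _ <-]]; first exact: esup_ge0.
  by rewrite tminus_le ?esup_ge0//; exact: Mminus_le_add_liminf.
apply: ge_esup => [|_ [g Fg <-]]; first exact: esup_ge0.
apply/lee_addgt0Pr => e e0.
have [f F1f small_f] := cauchyF_small_set cauF1 (divr_gt0 e0 (ltr0n R 2)).
have [x fx] : exists x, f x.
  by case: F1filter => _ F1_nonempty _ _; exact: F1_nonempty.
have M2x_le : Mminus d F2 x <= Mminus d F1 x + lhs.
  by rewrite -tminus_le ?esup_ge0//; apply: esup_ubound; exists x.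
apply: (le_trans (y := (e / 2)%:E + einf (d x @` g))).
  apply: einf_image_le_addl => y _.
  exact: (limsupF_dist_le_diam (y := y) dmetric F1f small_f fx).
rewrite [e in lhs + e%:E]splitr EFinD addeCA; apply: leeD2l.
apply: (le_trans (y := Mminus d F2 x)); first by apply: esup_ubound; exists g.
apply: le_trans M2x_le _; rewrite addeC; apply: leeD2r.
exact: (Mminus_le_diam (x := x) dmetric F1filter F1f small_f fx).
Qed.
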